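(* For $t\in T( *,\circ,x)$ define inductively a partial operator $\mathcal{C}(t)\in\mathcal{G}(\mathtt{ALD})$ by $\mathcal{C}(x)=\mathrm{id}$, $\mathcal{C}(t_1*t_2)=\mathcal{C}(t_1)\bullet\mathrm{sh}_1(\mathcal{C}(t_2))\bullet S^{+}_{\varepsilon}\bullet\mathrm{sh}_1(\mathcal{C}(t_1))^{-1}$, and $\mathcal{C}(t_1\circ t_2)=\mathcal{C}(t_1)\bullet\mathrm{sh}_1(\mathcal{C}(t_2))\bullet A^{+}_{\varepsilon}$. Then for every $t\in T( *,\circ,x)$ there exists $p$ such that, for every sufficiently large $n$, the operator $\mathcal{C}(t)$ maps $x^{[n]}$ to $t*x^{[n-p]}$.
   Context: $T( *,\circ,x)$: terms in the single variable $x$ with binary symbols $*,\circ$. Right vines: $x^{[1]}=x$, $x^{[n]}=x*x^{[n-1]}$. Addresses are finite sequences over $\{0,1\}$, $\varepsilon$ the empty one; $t/\alpha$ is the subterm at $\alpha$ ($0$ left, $1$ right). Partial operators act on the right ($t\cdot f$), $f\bullet g$ = ''$f$ then $g$'', and $f^{-1}$ is the inverse partial map. $S^{+}_{\alpha}$ is defined on $t$ iff $t/\alpha=t_1*(t_2\,\square\,t_3)$ with $\square\in\{*,\circ\}$, and replaces this subterm by $(t_1*t_2)\,\square\,(t_1*t_3)$; $A^{+}_{\alpha}$ is defined iff $t/\alpha=t_1*(t_2*t_3)$ and replaces it by $(t_1\circ t_2)*t_3$; $S^-_\alpha,A^-_\alpha$ are the inverse partial maps. $\mathcal{G}(\mathtt{ALD})$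 is the monoid of partial maps generated by all $S^{\pm}_\alpha,A^{\pm}_\alpha$. For a partial map $f$ and address $\beta$, $\mathrm{sh}_\beta(f)$ is the partial map applying $f$ to the $\beta$-th subterm (defined iff $t/\beta$ exists and is in the domain of $f$). *)

From Stdlib Require Import List Arith.
Import ListNotations.

Inductive term : Type :=
  | X : term
  | Star : term -> term -> term
  | Circ : term -> term -> term.

Definition term_eq_dec : forall t u : term, {t = u} + {t <> u}.
Proof. decide equality. Defined.

(* Right vines: vine n = x^[n] for n >= 1 (vine 0 := x, junk value, never used). *)
Fixpoint vine (n : nat) : term :=
  match n with
  | 0 | 1 => X
  | S m => Star X (vine m)
  end.

(* Addresses: false = 0 (left), true = 1 (right). *)
Definition address := list bool.

(* Partial operators, acting on the right. *)
Definition pmap := term -> option term.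

Definition pid : pmap := fun t => Some t.

(* f \bullet g  =  "f then g" *)
Definition pcomp (f g : pmap) : pmap :=
  fun t => match f t with Some u => g u | None => None end.

Fixpoint sh (beta : address) (f : pmap) : pmap :=
  match beta with
  | [] => f
  | b :: beta' => fun t =>
      match t with
      | X => None
      | Star t1 t2 =>
          if b then option_map (Star t1) (sh beta' f t2)
          else option_map (fun u => Star u t2) (sh beta' f t1)
      | Circ t1 t2 =>
          if b then option_map (Circ t1) (sh beta' f t2)
          else option_map (fun u => Circ u t2) (sh beta' f t1)
      end
  end.

Definition Splus0 : pmap := fun t =>
  match t with
  | Star t1 (Star t2 t3) => Some (Star (Star t1 t2) (Star t1 t3))
  | Star t1 (Circ t2 t3) => Some (Circ (Star t1 t2) (Star t1 t3))
  | _ => None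
  end.

Definition Sminus0 : pmap := fun t =>
  match t with
  | Star (Star t1 t2) (Star t1' t3) =>
      if term_eq_dec t1 t1' then Some (Star t1 (Star t2 t3)) else None
  | Circ (Star t1 t2) (Star t1' t3) =>
      if term_eq_dec t1 t1' then Some (Star t1 (Circ t2 t3)) else None
  | _ => None
  end.

Definition Aplus0 : pmap := fun t =>
  match t with
  | Star t1 (Star t2 t3) => Some (Star (Circ t1 t2) t3)
  | _ => None
  end.

Definition Aminus0 : pmap := fun t =>
  match t with
  | Star (Circ t1 t2) t3 => Some (Star t1 (Star t2 t3))
  | _ => None
  end.

Definition Splus (a : address) : pmap := sh a Splus0.
Definition Sminus (a : address) : pmap := sh a Sminus0.
Definition Aplus (a : address) : pmap := sh a Aplus0.
Definition Aminus (a : address) : pmap := sh a Aminus0.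

(* The operator C(t), computed together with its inverse partial map
   (first component: C(t); second component: C(t)^{-1}), using
   (f.g)^{-1} = g^{-1}.f^{-1}, sh_b(f)^{-1} = sh_b(f^{-1}), (S^+)^{-1} = S^-,
   (A^+)^{-1} = A^-, id^{-1} = id. *)
Fixpoint Cop (t : term) : pmap * pmap :=
  match t with
  | X => (pid, pid)
  | Star t1 t2 =>
      let (c1, c1i) := Cop t1 in
      let (c2, c2i) := Cop t2 in
      ( pcomp c1 (pcomp (sh [true] c2) (pcomp (Splus []) (sh [true] c1i))),
        pcomp (sh [true] c1) (pcomp (Sminus []) (pcomp (sh [true] c2i) c1i)) )
  | Circ t1 t2 =>
      let (c1, c1i) := Cop t1 in
      let (c2, c2i) := Cop t2 in
      ( pcomp c1 (pcomp (sh [true] c2) (Aplus [])),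
        pcomp (Aminus []) (pcomp (sh [true] c2i) c1i) )
  end.

Definition C (t : term) : pmap := fst (Cop t).

(* Induction on [t], following simultaneously [C t] and the inverse map
   computed alongside it: for all large [m], [C t] sends [x^[m+p]] to
   [t * x^[m]] and the inverse sends [t * x^[m]] back to [x^[m+p]].  The
   inverse half is needed because [C (t1 * t2)] ends with [sh_1(C t1)^-1],
   applied to [t1 * x^[k]] after [S^+] has duplicated [t1]; for [t1 o t2] the
   shifts add up, for [t1 * t2] only [t2]'s shift survives. *)

From Stdlib Require Import List Arith Lia.
Import ListNotations.

Definition vine_shift (c : pmap * pmap) (t : term) (p : nat) : Prop :=
  exists M, forall m, M <= m ->
    fst c (vine (m + p)) = Some (Star t (vine m)) /\
    snd c (Star t (vine m)) = Some (vine (m + p)).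

Lemma vine_succ (m : nat) : 1 <= m -> vine (m + 1) = Star X (vine m).
Proof. intro Hm; rewrite Nat.add_1_r; destruct m; [lia | reflexivity]. Qed.

Lemma Cop_X_shift : vine_shift (Cop X) X 1.
Proof.
  exists 1; intros m Hm; cbn; unfold pid; rewrite vine_succ by exact Hm.
  split; reflexivity.
Qed.

Lemma Sminus_root_Star (a b c : term) :
  Sminus [] (Star (Star a b) (Star a c)) = Some (Star a (Star b c)).
Proof. cbn; destruct (term_eq_dec a a) as [_ | []]; reflexivity. Qed.

Lemma Cop_Star_shift (t1 t2 : term) (p1 p2 : nat) :
  vine_shift (Cop t1) t1 p1 -> vine_shift (Cop t2) t2 p2 ->
  vine_shift (Cop (Star t1 t2)) (Star t1 t2) p2.
Proof.
  intros [M1 H1] [M2 H2]; cbn [Cop].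
  destruct (Cop t1) as [c1 c1i], (Cop t2) as [c2 c2i]; cbn [fst snd] in *.
  exists (M1 + M2 + p1); intros m Hm; cbn [fst snd].
  assert (Hk : exists k, m = k + p1) by (exists (m - p1); lia).
  destruct Hk as [k ->].
  destruct (H1 k) as [C1k C1ik]; [lia |].
  destruct (H1 (k + p2)) as [C1 C1i]; [lia |].
  destruct (H2 k) as [C2 C2i]; [lia |].
  replace (k + p1 + p2) with (k + p2 + p1) by lia.
  unfold pcomp; split.
  - rewrite C1; cbn [sh option_map]; rewrite C2; cbn [sh option_map Splus Splus0].
    rewrite C1ik; reflexivity.
  - cbn [sh option_map]; rewrite C1k; cbn [option_map]; rewrite Sminus_root_Star.
    cbn [sh option_map]; rewrite C2i; cbn [option_map]; rewrite C1i; reflexivity.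
Qed.

Lemma Cop_Circ_shift (t1 t2 : term) (p1 p2 : nat) :
  vine_shift (Cop t1) t1 p1 -> vine_shift (Cop t2) t2 p2 ->
  vine_shift (Cop (Circ t1 t2)) (Circ t1 t2) (p1 + p2).
Proof.
  intros [M1 H1] [M2 H2]; cbn [Cop].
  destruct (Cop t1) as [c1 c1i], (Cop t2) as [c2 c2i]; cbn [fst snd] in *.
  exists (M1 + M2); intros m Hm; cbn [fst snd].
  destruct (H1 (m + p2)) as [C1 C1i]; [lia |].
  destruct (H2 m) as [C2 C2i]; [lia |].
  replace (m + (p1 + p2)) with (m + p2 + p1) by lia.
  unfold pcomp; split.
  - rewrite C1; cbn [sh option_map]; rewrite C2; reflexivity.
  - cbn [Aminus Aminus0 sh option_map]; rewrite C2i; cbn [option_map].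
    exact C1i.
Qed.

Lemma Cop_vine_shift (t : term) : exists p, vine_shift (Cop t) t p.
Proof.
  induction t as [| t1 [p1 IH1] t2 [p2 IH2] | t1 [p1 IH1] t2 [p2 IH2]].
  - exists 1; exact Cop_X_shift.
  - exists p2; exact (Cop_Star_shift t1 t2 p1 p2 IH1 IH2).
  - exists (p1 + p2); exact (Cop_Circ_shift t1 t2 p1 p2 IH1 IH2).
Qed.

Theorem lemma3p4 : forall t : term,
  exists p N : nat, p < N /\
    forall n : nat, N <= n -> C t (vine n) = Some (Star t (vine (n - p))).
Proof.
  intro t; destruct (Cop_vine_shift t) as [p [M HM]].
  exists p, (M + p + 1); split; [lia |].
  intros n Hn; unfold C.
  replace n with (n - p + p) at 1 by lia.
  apply (HM (n - p)); lia.
Qed.
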